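(* Let $F$ be a field of characteristic $p > 0$. If $\phi \in F(z)$ is a rational function with no finite critical point, then there exist polynomials $f_1, f_2, g_1, g_2 \in F[z]$ such that \[ \phi(z) = \frac{f_1(z^p) + z f_2(z^p)}{g_1(z^p) + z g_2(z^p)}, \] and $f_2 g_1 - f_1 g_2$ is a nonzero constant function.
   Context: Finite critical points are taken over an algebraic closure $\overline{F}$: a point $x \in \overline F$ is a finite critical point of $\phi$ if, for a fractional linear transformation $\sigma$ over $\overline F$ with $\sigma(\phi(x)) \neq \infty$, $\frac{d(\sigma\circ\phi)}{dz}(x) = 0$. *)

From HB Require Import structures.
From mathcomp Require Import all_boot all_order all_algebra.
From mathcomp Require Import fraction.
Set Implicit Arguments. Unset Strict Implicit. Unset Printing Implicit Defensive.
Import GRing.Theory.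
Local Open Scope ring_scope.

Notation "x %:F" := (@FracField.tofrac _ x) : ring_scope.

Definition is_alg_closure (F : fieldType) (L : closedFieldType)
  (iota : {rmorphism F -> L}) : Prop :=
  forall x : L, exists q : {poly F}, q != 0 /\ root (map_poly iota q) x.

(* x in L is a finite critical point of phi in F(z) (viewed over L via iota):
   for some fractional linear transformation sigma(w) = (al w + be)/(ga w + de)
   (al de - be ga <> 0) with sigma(phi(x)) finite, i.e. sigma o phi = N/D with
   N, D in L[z] and D(x) <> 0, the derivative (N'D - ND')/D^2 of sigma o phi
   vanishes at x.  Here phi = a/b with a, b in F[z], b <> 0, and
   sigma o phi = (al a + be b)/(ga a + de b). *)
Definition finite_critical_point (F : fieldType) (L : closedFieldType)
  (iota : {rmorphism F -> L}) (phi : {fraction {poly F}}) (x : L) : Prop :=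
  exists a b : {poly F}, b != 0 /\ phi = (a%:F) / (b%:F) /\
  let a' := map_poly iota a in let b' := map_poly iota b in
  exists al be ga de : L, al * de - be * ga != 0 /\
  exists N D : {poly L}, D.[x] != 0 /\
    N * (ga *: a' + de *: b') = D * (al *: a' + be *: b') /\
    (N^`() * D - N * D^`()).[x] = 0.

From HB Require Import structures.
From mathcomp Require Import all_boot all_order all_algebra.
From mathcomp Require Import fraction generic_quotient ring.
Import GRing.Theory.
Set Implicit Arguments.
Unset Strict Implicit.
Local Open Scope ring_scope.
Local Open Scope quotient_scope.

(* Write phi = a/b with a, b coprime.  If the Wronskian W = a'b - ab' had a
   root x in L, then x would be a finite critical point of phi (or of 1/phi
   when b(x) = 0), so W is a nonzero constant.  Differentiating gives
   a''b = ab'', hence a | a'' and b | b'' by coprimality, and comparing degrees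
   a'' = b'' = 0.  In characteristic p this forces every coefficient of index
   not congruent to 0 or 1 mod p to vanish, i.e. a = f1(z^p) + z f2(z^p) and
   b = g1(z^p) + z g2(z^p); since (f(z^p))' = 0, the Wronskian of these forms
   is (f2 g1 - f1 g2)(z^p), which is therefore the nonzero constant W. *)

Lemma frac_numden (R : idomainType) (phi : {fraction R}) :
  exists a b : R, b != 0 /\ phi = a%:F / b%:F.
Proof.
exists \n_(repr phi), \d_(repr phi); split; first exact: denom_ratioP.
rewrite -[phi in LHS]reprK; set x := repr phi.
unlock FracField.tofrac.
rewrite -[_ / _]/(FracField.mul _ (FracField.inv _)).
rewrite -FracField.pi_inv -FracField.pi_mul; congr \pi.
rewrite /FracField.mulf /FracField.invf !numden_Ratio ?oner_eq0 ?denom_ratioP //.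
by rewrite mulr1 mul1r Ratio_numden.
Qed.

Lemma frac_coprime_numden (F : fieldType) (phi : {fraction {poly F}}) :
  exists a b : {poly F}, [/\ coprimep a b, b != 0 & phi = a%:F / b%:F].
Proof.
have [a [b [b_neq0 ->]]] := frac_numden phi.
set g := gcdp a b.
have g_neq0 : g != 0 by rewrite gcdp_eq0 negb_and b_neq0 orbT.
have Da : a = a %/ g * g by rewrite divpK ?dvdp_gcdl.
have Db : b = b %/ g * g by rewrite divpK ?dvdp_gcdr.
exists (a %/ g), (b %/ g); split.
- by apply: coprimep_div_gcd; rewrite b_neq0 orbT.
- by apply: contraNneq b_neq0 => b'0; rewrite Db b'0 mul0r.
- by rewrite {1}Da {1}Db !tofracM invfM mulrACA divff ?mulr1 ?tofrac_eq0.
Qed.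

Section Wronskian.
Variable R : comNzRingType.
Implicit Types a b : {poly R}.

Definition wronskian a b := a^`() * b - a * b^`().

Lemma wronskianC a b : wronskian b a = - wronskian a b.
Proof. by rewrite /wronskian opprB [a^`() * b]mulrC [a * b^`()]mulrC. Qed.

Lemma deriv_wronskian a b : (wronskian a b)^`() = a^`()^`() * b - a * b^`()^`().
Proof. by rewrite /wronskian derivB !derivM addrKA. Qed.

End Wronskian.

Lemma map_wronskian (R S : comNzRingType) (f : {rmorphism R -> S}) (a b : {poly R}) :
  map_poly f (wronskian a b) = wronskian (map_poly f a) (map_poly f b).
Proof. by rewrite /wronskian rmorphB !rmorphM !deriv_map. Qed.

Section CriticalPoints.
Variables (F : fieldType) (L : closedFieldType) (iota : {rmorphism F -> L}).
Variables (phi : {fraction {poly F}}) (a b : {poly F}).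
Hypotheses (ab_coprime : coprimep a b) (b_neq0 : b != 0)
  (phiE : phi = a%:F / b%:F).

Local Notation "q ^iota" := (map_poly iota q) (format "q ^iota").

(* Take sigma = id if b(x) != 0, and sigma(w) = 1/w otherwise; in the latter
   case a(x) != 0 by coprimality. *)
Lemma wronskian_root_critical x :
  root (wronskian a b)^iota x -> finite_critical_point iota phi x.
Proof.
rewrite map_wronskian => /eqP Wx.
exists a, b; split=> //; split=> //=.
have [bx0|bx_neq0] := boolP (root b^iota x).
- have ax_neq0 : a^iota.[x] != 0.
    by apply: coprimep_root bx0; rewrite coprimep_sym coprimep_map.
  exists 0, 1, 1, 0; split; first by rewrite mul0r mul1r sub0r oppr_eq0 oner_eq0.
  exists b^iota, a^iota; split=> //; split.
    by rewrite !scale0r !scale1r addr0 add0r mulrC.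
  by rewrite -/(wronskian _ _) wronskianC hornerN Wx oppr0.
- exists 1, 0, 0, 1; split; first by rewrite mulr1 mul0r subr0 oner_eq0.
  exists a^iota, b^iota; split=> //; split.
    by rewrite !scale0r !scale1r addr0 add0r mulrC.
  exact: Wx.
Qed.

Lemma no_critical_wronskian_const :
  (forall x : L, ~ finite_critical_point iota phi x) ->
  exists2 c, c != 0 & wronskian a b = c%:P.
Proof.
move=> no_crit; apply/size_poly1P; rewrite -(size_map_poly iota).
apply/negbNE/closed_rootP => -[x Wx].
exact: no_crit x (wronskian_root_critical Wx).
Qed.

End CriticalPoints.

Lemma dvdp_deriv2_eq0 (R : idomainType) (a : {poly R}) :
  a %| a^`()^`() -> a^`()^`() = 0.
Proof.
move=> a_dvd; apply: contraTeq a_dvd => a''_neq0.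
have a'_neq0 : a^`() != 0 by apply: contraNneq a''_neq0 => ->; rewrite deriv0.
have a_neq0 : a != 0 by apply: contraNneq a'_neq0 => ->; rewrite deriv0.
apply/negP => /(dvdp_leq a''_neq0); rewrite leqNgt.
by rewrite (ltn_trans (lt_size_deriv a'_neq0) (lt_size_deriv a_neq0)).
Qed.

Lemma wronskian_eqC_deriv2 (R : idomainType) (a b : {poly R}) c :
  coprimep a b -> wronskian a b = c%:P -> a^`()^`() = 0 /\ b^`()^`() = 0.
Proof.
move=> ab_coprime W_const.
have : (wronskian a b)^`() = 0 by rewrite W_const derivC.
rewrite deriv_wronskian => /eqP; rewrite subr_eq0 => /eqP a''b_eq.
split; apply: dvdp_deriv2_eq0.
- by rewrite -(Gauss_dvdpl _ ab_coprime) a''b_eq dvdp_mulr.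
- have ba_coprime : coprimep b a by rewrite coprimep_sym.
  by rewrite -(Gauss_dvdpr _ ba_coprime) -a''b_eq dvdp_mull.
Qed.

Section Multisection.
Variables (R : idomainType) (p : nat).
Hypothesis pcharRp : p \in [pchar R].
Implicit Types f q : {poly R}.

Let p_prime : prime p := pcharf_prime pcharRp.
Let p_gt0 : (0 < p)%N := prime_gt0 p_prime.

(* [q = \sum_(k < p) 'X^k * (multisection p k q \Po 'X^p)]. *)
Definition multisection k q := \poly_(i < size q) q`_(i * p + k).

Lemma coef_multisection k q i : (multisection k q)`_i = q`_(i * p + k).
Proof.
rewrite coef_poly; case: ltnP => // le_q_i; rewrite nth_default //.
by rewrite (leq_trans le_q_i) // (leq_trans (leq_pmulr _ p_gt0)) ?leq_addr.
Qed.

Lemma deriv_comp_Xp f : (f \Po 'X^p)^`() = 0.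
Proof.
by rewrite deriv_comp derivXn -mulr_natr -polyC_natr (pcharf0 pcharRp) !mulr0.
Qed.

Lemma deriv2_eq0_coef q n :
  q^`()^`() = 0 -> ~~ (p %| n)%N -> ~~ (p %| n.+1)%N -> q`_n.+1 = 0.
Proof.
case: n => [|n] q''0 p_ndvd_n p_ndvd_n1; first by rewrite dvdn0 in p_ndvd_n.
have /eqP := congr1 (fun r : {poly R} => r`_n) q''0.
rewrite !coef_deriv coef0 -mulrnA -mulr_natr mulf_eq0 => /orP[/eqP //|].
rewrite -(dvdn_pcharf pcharRp) Euclid_dvdM //.
by rewrite (negbTE p_ndvd_n) (negbTE p_ndvd_n1).
Qed.

Lemma deriv2_eq0_multisection q : q^`()^`() = 0 ->
  q = (multisection 0 q \Po 'X^p) + 'X * (multisection 1 q \Po 'X^p).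
Proof.
move=> q''0; apply/polyP => n.
rewrite coefD coefXM !coef_comp_poly_Xn // !coef_multisection.
case: n => [|n] /=; first by rewrite dvdn0 div0n addr0.
have [p_dvd_n|p_ndvd_n] := boolP (p %| n)%N.
  have p_ndvd_n1 : ~~ (p %| n.+1)%N.
    by rewrite -addn1 dvdn_addr // dvdn1 gtn_eqF ?prime_gt1.
  by rewrite (negbTE p_ndvd_n1) add0r divnK ?addn1.
rewrite addr0; case: ifP => [p_dvd_n1|/negbT p_ndvd_n1].
  by rewrite divnK ?addn0.
exact: deriv2_eq0_coef.
Qed.

Lemma wronskian_comp_Xp f1 f2 g1 g2 :
  wronskian ((f1 \Po 'X^p) + 'X * (f2 \Po 'X^p))
            ((g1 \Po 'X^p) + 'X * (g2 \Po 'X^p))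
  = (f2 * g1 - f1 * g2) \Po 'X^p.
Proof.
have deriv_sum (h1 h2 : {poly R}) :
    ((h1 \Po 'X^p) + 'X * (h2 \Po 'X^p))^`() = h2 \Po 'X^p.
  by rewrite derivD derivM !deriv_comp_Xp derivX mulr0 add0r addr0 mul1r.
rewrite /wronskian !deriv_sum comp_polyB !comp_polyM; ring.
Qed.

Lemma comp_Xp_eqC f c : f \Po 'X^p = c%:P -> f = c%:P.
Proof.
move=> fXp; apply/polyP => i.
have := congr1 (fun r : {poly R} => r`_(i * p)) fXp.
rewrite /= coef_comp_poly_Xn // dvdn_mull // mulnK // !coefC muln_eq0.
by rewrite (negbTE (lt0n_neq0 p_gt0)) orbF.
Qed.

End Multisection.

Theorem lemma3p1 (F : fieldType) (p : nat) (hp : p \in [pchar F])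
  (L : closedFieldType) (iota : {rmorphism F -> L})
  (hL : is_alg_closure iota)
  (phi : {fraction {poly F}})
  (hcrit : forall x : L, ~ finite_critical_point iota phi x) :
  exists f1 f2 g1 g2 : {poly F},
    phi = ((f1 \Po 'X^p) + 'X * (f2 \Po 'X^p))%:F
          / ((g1 \Po 'X^p) + 'X * (g2 \Po 'X^p))%:F
    /\ exists c : F, c != 0 /\ f2 * g1 - f1 * g2 = c%:P.
Proof.
have [a [b [ab_coprime b_neq0 phiE]]] := frac_coprime_numden phi.
have [c c_neq0 W_const] :=
  no_critical_wronskian_const ab_coprime b_neq0 phiE hcrit.
have [a''0 b''0] := wronskian_eqC_deriv2 ab_coprime W_const.
have Da := deriv2_eq0_multisection hp a''0.
have Db := deriv2_eq0_multisection hp b''0.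
exists (multisection p 0 a), (multisection p 1 a),
       (multisection p 0 b), (multisection p 1 b).
split; first by rewrite -Da -Db.
exists c; split=> //; apply: (comp_Xp_eqC hp).
by rewrite -(wronskian_comp_Xp hp) -Da -Db.
Qed.
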